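(* Let $R$ be a finite local Frobenius ring, not a field and of odd characteristic, with a fixed primitive additive character $\psi$. Let $\tau$ be a non-primitive multiplicative character and $\chi$ a non-primitive multiplicative character of $R$. Then $$\sum_{a\in R^\times}\chi(a)\,|K_\tau(a)|^2=\begin{cases}|R^\times|\,|R| & \text{if }\chi=\mathbb{1}\text{ or }\chi=\sigma,\\ 0&\text{otherwise.}\end{cases}$$
   Context: All rings are finite and commutative with identity; $R^\times$ is the unit group; $M$ is the maximal ideal. An additive character $(R,+)\to\mathbb{C}^*$ is primitive if the only ideal on which it is identically $1$ is $(0)$; $R$ is Frobenius if such a character exists. A multiplicative character is a homomorphism $R^\times\to\mathbb{C}^*$; $\mathbb{1}$ is the trivial one; its conductor is $R$ if it is trivial, and otherwise the largest ideal $I\subseteq M$ such that it is identically $1$ on $1+I$; it is primitive if its conductor is $(0)$. $K_\tau(a)=\sum_{u\in R^\times}\tau(u)\psi(u+au^{-1})$. Odd characteristic means $R/M$ has odd characteristic; the quadratic character $\sigma$ sends $u\in R^\times$ to the quadratic character of its residue class in $R/M$. *)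

From HB Require Import structures.
From mathcomp Require Import all_boot all_order all_algebra all_fingroup all_field.
Set Implicit Arguments. Unset Strict Implicit. Unset Printing Implicit Defensive.
Import GRing.Theory Num.Theory.
Local Open Scope ring_scope.

Section Defs.
Variable R : finComUnitRingType.

Definition is_ideal (I : {set R}) : Prop :=
  0 \in I /\ (forall x y, x \in I -> y \in I -> x + y \in I) /\
  (forall r x, x \in I -> r * x \in I).

Definition is_maximal_ideal (M : {set R}) : Prop :=
  is_ideal M /\ M != [set: R] /\
  (forall J : {set R}, is_ideal J -> M \subset J -> J = M \/ J = [set: R]).

Definition is_unique_maximal_ideal (M : {set R}) : Prop :=
  is_maximal_ideal M /\ forall J, is_maximal_ideal J -> J = M.

Definition odd_residue_char (M : {set R}) : Prop :=
  exists p : nat, [/\ prime p, odd p & (p%:R : R) \in M].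

Definition is_field_ring : Prop := forall x : R, x != 0 -> x \is a GRing.unit.

Definition additive_char (psi : R -> algC) : Prop :=
  (forall x, psi x != 0) /\ forall x y, psi (x + y) = psi x * psi y.

Definition primitive_additive_char (psi : R -> algC) : Prop :=
  additive_char psi /\
  forall I : {set R}, is_ideal I -> (forall x, x \in I -> psi x = 1) -> I = [set 0].

Definition mult_char (chi : {unit R} -> algC) : Prop :=
  (forall u, chi u != 0) /\ forall u v, chi (u * v)%g = chi u * chi v.

Definition trivial_char (chi : {unit R} -> algC) : Prop := forall u, chi u = 1.

Definition trivial_on_1plus (chi : {unit R} -> algC) (I : {set R}) : Prop :=
  forall u : {unit R}, FinRing.uval u - 1 \in I -> chi u = 1.

(* conductor is (0): chi nontrivial and the largest ideal I <= M with chi = 1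
   on 1 + I is (0), i.e. every such ideal is (0) *)
Definition primitive_mult_char (M : {set R}) (chi : {unit R} -> algC) : Prop :=
  ~ trivial_char chi /\
  forall I : {set R}, is_ideal I -> I \subset M -> trivial_on_1plus chi I ->
    I = [set 0].

Definition quad_char (M : {set R}) (u : {unit R}) : algC :=
  if [exists v : R, FinRing.uval u - v ^+ 2 \in M] then 1 else -1.

Definition kloosterman (psi : R -> algC) (tau : {unit R} -> algC) (a : R) : algC :=
  \sum_(u : {unit R}) tau u * psi (FinRing.uval u + a * (FinRing.uval u)^-1).

End Defs.

(* Let soc be the annihilator of M.  As R is local but not a field, soc is a
   nonzero ideal contained in M with soc^2 = 0 that meets every nonzero ideal,
   so a non-primitive character is trivial on 1 + L for some nonzero ideal L of
   soc.  Averaging K_tau(a) over the twists u -> u (1 + s), s in L, keeps only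
   the u with u^2 = a mod M; averaging the moment over a -> a (1 + s) further
   keeps only the pairs (t v, v) with t in 1 + M.  The pairs with t outside
   1 + soc cancel under a shift v -> v + y (this needs 2 invertible), leaving
     sum_a chi(a) |K_tau(a)|^2
       = c_tau * (sum_(w in 1 + M) chi(w)) * (sum_v chi(v)^2),
   where c_tau = sum_(t in 1 + soc) tau(t).  The last two factors vanish unless
   chi is trivial on 1 + M and chi^2 = 1, which (the squares having index at
   most 2) means chi = 1 or chi = sigma; then they take their value at chi = 1,
   where Parseval's identity gives |R^x| |R|. *)

From HB Require Import structures.
From mathcomp Require Import all_boot all_order all_algebra all_fingroup all_field.
From mathcomp Require Import zify ring.
From Stdlib Require Import Classical.
Import GRing.Theory Num.Theory.
Local Open Scope ring_scope.
Set Implicit Arguments. Unset Strict Implicit. Unset Printing Implicit Defensive.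

Section Ideals.
Variable R : finComUnitRingType.

Section OneIdeal.
Variables (I : {set R}) (hI : is_ideal I).

Lemma ideal0 : 0 \in I. Proof. by case: hI. Qed.

Lemma idealD x y : x \in I -> y \in I -> x + y \in I.
Proof. by case: hI => _ [hD _]; apply: hD. Qed.

Lemma idealMl (r x : R) : x \in I -> r * x \in I.
Proof. by case: hI => _ [_ hM]; apply: hM. Qed.

Lemma idealMr (x r : R) : x \in I -> x * r \in I.
Proof. by rewrite mulrC; apply: idealMl. Qed.

Lemma idealNE x : (- x \in I) = (x \in I).
Proof. by apply/idP/idP => /(idealMl (-1)); rewrite ?mulN1r ?opprK. Qed.

Lemma idealB x y : x \in I -> y \in I -> x - y \in I.
Proof. by move=> hx hy; rewrite idealD ?idealNE. Qed.

Lemma idealDr x y : y \in I -> (x + y \in I) = (x \in I).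
Proof.
move=> hy; apply/idP/idP => [hxy|hx]; last exact: idealD.
by rewrite -(addrK y x) idealB.
Qed.

Lemma ideal_neq0 : I != [set 0] -> exists2 s, s \in I & s != 0.
Proof.
rewrite eqEsubset sub1set ideal0 andbT => /subsetPn[s hs].
by rewrite inE => hs0; exists s.
Qed.

End OneIdeal.

Lemma idealI (I J : {set R}) : is_ideal I -> is_ideal J -> is_ideal (I :&: J).
Proof.
move=> hI hJ; split; first by rewrite inE !ideal0.
split=> [x y|r x]; rewrite !inE => /andP[hxI hxJ].
  by case/andP => hyI hyJ; rewrite !idealD.
by rewrite !idealMl.
Qed.

Definition principal (x : R) := [set y | [exists r, y == r * x]].

Lemma principalP x y : reflect (exists r, y = r * x) (y \in principal x).
Proof. by rewrite inE; apply: (iffP existsP) => -[r /eqP]; exists r. Qed.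

Lemma principal_ideal x : is_ideal (principal x).
Proof.
split; first by apply/principalP; exists 0; rewrite mul0r.
split=> [a b /principalP[r1 ->] /principalP[r2 ->]|r a /principalP[r1 ->]].
  by apply/principalP; exists (r1 + r2); rewrite mulrDl.
by apply/principalP; exists (r * r1); rewrite mulrA.
Qed.

Lemma principal_id x : x \in principal x.
Proof. by apply/principalP; exists 1; rewrite mul1r. Qed.

Lemma proper_ideal_sub_maximal (J : {set R}) : is_ideal J -> J != [set: R] ->
  exists2 J', is_maximal_ideal J' & J \subset J'.
Proof.
move: {2}#|~: J| (leqnn #|~: J|) => n; elim: n J => [|n IH] J hc hJ hT.
  by move: hc hT; rewrite leqn0 cards_eq0 => /eqP hC; rewrite -[J]setCK hC setC0 eqxx.
case: (classic (exists J2 : {set R}, [/\ is_ideal J2, J \proper J2 & J2 != setT]))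
    => [[J2 [hJ2 hJJ2 hJ2T]]|hmax].
  have [|J' hJ' hJ2J'] := IH J2 _ hJ2 hJ2T.
    by move: hc (proper_card hJJ2) (cardsC J) (cardsC J2); lia.
  by exists J' => //; apply: subset_trans hJ2J'; apply: proper_sub.
exists J => //; split; [done | split=> [//|J2 hJ2 hJJ2]].
have [->|hJ2T] := eqVneq J2 setT; [by right | left].
apply/eqP; apply: contraT => hne; exfalso; apply: hmax; exists J2; split=> //.
by rewrite properEneq hJJ2 andbT eq_sym.
Qed.

Lemma card_ideal_neq0 (L : {set R}) : is_ideal L -> (#|L|%:R : algC) != 0.
Proof. by move=> hL; rewrite pnatr_eq0 -lt0n; apply/card_gt0P; exists 0; apply: ideal0. Qed.

End Ideals.

Section LocalRing.
Variables (R : finComUnitRingType) (M : {set R}).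
Hypothesis hM : is_unique_maximal_ideal M.

Lemma ideal_M : is_ideal M. Proof. by case: hM => -[]. Qed.

Lemma max_idealE x : (x \in M) = (x \isn't a GRing.unit).
Proof.
apply/idP/idP => [hx|hx].
  apply: contraL hx => hu; apply/negP => hx; case: hM => [[_ [/negP hMT _]] _].
  apply: hMT; apply/eqP/setP => y; rewrite inE -[y]mulr1 -(mulVr hu) mulrA.
  by rewrite (idealMl ideal_M).
have hxT : principal x != [set: R].
  apply/negP => /eqP hxT; move/negP: hx; apply.
  have /principalP[r hr] : 1 \in principal x by rewrite hxT inE.
  by apply/unitrP; exists r; rewrite [x * r]mulrC -hr.
have [J hJ hxJ] := proper_ideal_sub_maximal (principal_ideal x) hxT.
by case: hM => _ /(_ J hJ) <-; apply: (subsetP hxJ); apply: principal_id.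
Qed.

Lemma unitDM u m : u \is a GRing.unit -> m \in M -> u + m \is a GRing.unit.
Proof.
move=> hu hm; apply: contraLR hu; rewrite -!max_idealE => hum.
by rewrite -(addrK m u) (idealB ideal_M).
Qed.

Lemma unitMl_inM u x : u \is a GRing.unit -> (u * x \in M) = (x \in M).
Proof.
move=> hu; apply/idP/idP => [hux|]; last exact: (idealMl ideal_M u (x := x)).
by rewrite -[x]mul1r -(mulVr hu) -mulrA (idealMl ideal_M).
Qed.

Lemma unitMr_inM u x : u \is a GRing.unit -> (x * u \in M) = (x \in M).
Proof. by rewrite mulrC; apply: unitMl_inM. Qed.

Lemma unitr2 : odd_residue_char M -> (2 : R) \is a GRing.unit.
Proof.
case=> p [_ op hp]; rewrite -[_ \is a _]negbK -max_idealE; apply/negP => h2.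
have : (1 : R) \notin M by rewrite max_idealE unitr1.
have -> : (1 : R) = p%:R - p./2%:R * 2.
  by rewrite -{1}(odd_double_half p) op natrD -natrM muln2 addrK.
by rewrite (idealB ideal_M) // (idealMl ideal_M).
Qed.

Lemma unit_1plus s : s \in M -> {u : {unit R} | val u = 1 + s}.
Proof. by move=> hs; exists (FinRing.unit R (unitDM (unitr1 R) hs)). Qed.

Definition sqrt_mod (a : R) (u : {unit R}) := val u ^+ 2 - a \in M.

Lemma sqrt_modE a (u : {unit R}) : sqrt_mod a u = (val u - a * (val u)^-1 \in M).
Proof.
have hu : (val u)^-1 \is a GRing.unit by rewrite unitrV (valP u).
rewrite /sqrt_mod -(unitMl_inM _ hu); congr (_ \in M).
by rewrite mulrBr expr2 mulKr ?(valP u) // mulrC.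
Qed.

Lemma sum_units_M (F : R -> algC) :
  \sum_(a : R) F a = \sum_(u : {unit R}) F (val u) + \sum_(a in M) F a.
Proof.
rewrite (bigID (fun a => a \is a GRing.unit)) /=; congr (_ + _).
  rewrite (reindex_omap (val : {unit R} -> R) insub) => [|a ha]; last by rewrite insubT.
  by apply: eq_bigl => u; rewrite (valP u) valK eqxx.
by apply: eq_bigl => a; rewrite max_idealE.
Qed.

End LocalRing.

Section Socle.
Variables (R : finComUnitRingType) (M : {set R}).

Definition socle := [set s : R | [forall m in M, s * m == 0]].

Lemma socleP s : reflect (forall m, m \in M -> s * m = 0) (s \in socle).
Proof. by rewrite inE; apply: (iffP forall_inP) => h m /h /eqP. Qed.

Lemma socle_ideal : is_ideal socle.
Proof.
split; first by apply/socleP => m _; rewrite mul0r.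
split=> [x y /socleP hx /socleP hy|r x /socleP hx]; apply/socleP => m hm.
  by rewrite mulrDl hx ?hy ?addr0.
by rewrite -mulrA hx ?mulr0.
Qed.

Hypotheses (hM : is_unique_maximal_ideal M) (hnf : ~ is_field_ring R).

Lemma socle_subset_M : socle \subset M.
Proof.
have [m hm hm0] : exists2 m, m \in M & m != 0.
  apply: NNPP => hn; apply: hnf => x hx; rewrite -[_ \is a _]negbK -(max_idealE hM).
  by apply/negP => hxM; apply: hn; exists x.
apply/subsetP => s /socleP hs; rewrite (max_idealE hM); apply: (contra _ hm0) => hu; apply/eqP.
by rewrite -[m]mul1r -(mulVr hu) -mulrA hs // mulr0.
Qed.

Lemma socle_mul0 s t : s \in socle -> t \in socle -> s * t = 0.
Proof. by move=> /socleP hs /(subsetP socle_subset_M); apply: hs. Qed.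

Lemma socle_meets x : x != 0 -> exists2 r, r * x != 0 & r * x \in socle.
Proof.
move: {2}#|principal x| (leqnn #|principal x|) => n; elim: n x => [|n IH] x hc hx.
  by move: hc; rewrite leqn0 => /eqP/card0_eq/(_ x); rewrite principal_id inE.
case: (boolP (x \in socle)) => hs; first by exists 1; rewrite mul1r.
move: hs; rewrite inE => /forall_inPn[m hm hxm].
have hsub : principal (m * x) \proper principal x.
  rewrite properE; apply/andP; split.
    apply/subsetP => y /principalP[r ->].
    by apply/principalP; exists (r * m); rewrite mulrA.
  apply/subsetPn; exists x; first exact: principal_id.
  apply/principalP => -[r hr]; move/eqP: hx; apply.
  have hu : 1 - r * m \is a GRing.unit.
    by rewrite (unitDM hM) ?unitr1 // (idealNE (ideal_M hM)) (idealMl (ideal_M hM)).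
  by rewrite -[x]mul1r -(mulVr hu) -mulrA mulrBl mul1r -mulrA -hr subrr mulr0.
have hc' : (#|principal (m * x)%R| <= n)%N by move: hc (proper_card hsub); lia.
have hmx : m * x != 0 by rewrite mulrC.
have [r hr hrs] := IH (m * x) hc' hmx.
by exists (r * m); rewrite -mulrA.
Qed.

Lemma socle_neq0 : socle != [set 0].
Proof.
have [r hr hrs] := socle_meets (oner_neq0 R).
by apply: contraNneq hr => h; move: hrs; rewrite h inE.
Qed.

Lemma idealI_socle_neq0 (L : {set R}) : is_ideal L -> L != [set 0] ->
  L :&: socle != [set 0].
Proof.
move=> hL hL0; have [x hx hx0] := ideal_neq0 hL hL0.
have [r hr hrs] := socle_meets hx0; apply: contraNneq hr => hLs.
have : r * x \in L :&: socle by rewrite inE hrs (idealMl hL).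
by rewrite hLs inE.
Qed.

Lemma invr_1plus_socle s : s \in socle -> (1 + s)^-1 = 1 - s.
Proof.
move=> hs; apply: mulr1_eq.
by rewrite mulrDl mul1r mulrBr mulr1 (socle_mul0 hs hs) subr0 addrNK.
Qed.

End Socle.

Lemma unity_root_mul_conj (z : algC) n : (0 < n)%N -> z ^+ n = 1 -> z * z^* = 1.
Proof.
move=> hn hz; rewrite -normCK.
have : `|z| ^+ n == 1 by rewrite -normrX hz normr1.
by rewrite pexpr_eq1 // => /eqP ->; rewrite expr1n.
Qed.

Lemma sum_eq0_twist (T : finType) (P : pred T) (h : T -> T) (F : T -> algC) c :
  injective h -> (forall x, P (h x) = P x) -> (forall x, P x -> F (h x) = c * F x) ->
  c != 1 -> \sum_(x | P x) F x = 0.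
Proof.
move=> hi hP hF hc; have : \sum_(x | P x) F x = c * \sum_(x | P x) F x.
  rewrite [LHS](reindex_inj hi) mulr_sumr; apply: eq_big => x; first by rewrite hP.
  by move=> px; rewrite hF // -hP.
by move/eqP; rewrite -subr_eq0 -{1}[\sum_(x | _) _]mul1r -mulrBl mulf_eq0 subr_eq0
  eq_sym (negbTE hc) => /eqP.
Qed.

Section AdditiveCharacter.
Variables (R : finComUnitRingType) (psi : R -> algC).
Hypothesis hpsi : additive_char psi.

Lemma psiD x y : psi (x + y) = psi x * psi y.
Proof. by case: hpsi. Qed.

Lemma psi0 : psi 0 = 1.
Proof.
case: hpsi => hnz _; apply: (mulfI (hnz 0)).
by rewrite -psiD addr0 mulr1.
Qed.

Lemma psiMn x k : psi (x *+ k) = psi x ^+ k.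
Proof. by elim: k => [|k IH]; rewrite ?psi0 // mulrS psiD IH exprS. Qed.

Lemma psi_conj x : (psi x)^* = psi (- x).
Proof.
have hx1 : psi x * (psi x)^* = 1.
  apply: (unity_root_mul_conj (order_gt0 x)).
  by rewrite -psiMn -FinRing.zmodXgE expg_order FinRing.zmod1gE psi0.
case: hpsi => hnz _; apply: (mulfI (hnz x)).
by rewrite hx1 -psiD subrr psi0.
Qed.

Lemma psi_mul_conj x y : psi x * (psi y)^* = psi (x - y).
Proof. by rewrite psi_conj psiD. Qed.

End AdditiveCharacter.

Section MultiplicativeCharacter.
Variables (R : finComUnitRingType) (ch : {unit R} -> algC).
Hypothesis hch : mult_char ch.

Lemma mult_charM u v : ch (u * v)%g = ch u * ch v.
Proof. by case: hch. Qed.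

Lemma mult_char1 : ch 1%g = 1.
Proof.
case: hch => hnz _; apply: (mulfI (hnz 1%g)).
by rewrite -mult_charM mulg1 mulr1.
Qed.

Lemma mult_charX u k : ch (u ^+ k)%g = ch u ^+ k.
Proof. by elim: k => [|k IH]; rewrite ?expg0 ?mult_char1 // expgS mult_charM IH exprS. Qed.

Lemma mult_char_mul_conj u : ch u * (ch u)^* = 1.
Proof.
by apply: (unity_root_mul_conj (order_gt0 u)); rewrite -mult_charX expg_order mult_char1.
Qed.

End MultiplicativeCharacter.

Section NonprimitiveCharacter.
Variables (R : finComUnitRingType) (M : {set R}).
Hypothesis hM : is_unique_maximal_ideal M.

Definition kernel_socle_ideal (ch : {unit R} -> algC) (L : {set R}) :=
  [/\ is_ideal L, L \subset socle M, L != [set 0] & trivial_on_1plus ch L].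

Lemma nonprimitive_kernel_socle_ideal ch : ~ primitive_mult_char M ch ->
  exists L, kernel_socle_ideal ch L.
Proof.
move=> hnp; case: (classic (trivial_char ch)) => ht.
  exists (socle M); split; [exact: socle_ideal | exact: subxx | exact: socle_neq0 |].
  by move=> u _; apply: ht.
have [I [hI hIM htI hI0]] : exists I, [/\ is_ideal I, I \subset M,
    trivial_on_1plus ch I & I != [set 0]].
  apply: NNPP => hn; apply: hnp; split=> // I hI hIM htI.
  by apply/eqP/negPn/negP => hI0; apply: hn; exists I.
exists (I :&: socle M); split; rewrite ?subsetIr ?idealI_socle_neq0 //.
  by apply: idealI => //; apply: socle_ideal.
by move=> u /setIP[hu _]; apply: htI.
Qed.

Lemma sum_mult_char_twist ch (L : {set R}) (G : R -> algC) s :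
  mult_char ch -> L \subset M -> trivial_on_1plus ch L -> s \in L ->
  \sum_(u : {unit R}) ch u * G (val u * (1 + s)) = \sum_(u : {unit R}) ch u * G (val u).
Proof.
move=> hch hLM hker hs; have [h hh] := unit_1plus hM (subsetP hLM _ hs).
rewrite [RHS](reindex_inj (mulIg h)); apply: eq_bigr => u _.
have h1 : ch h = 1 by apply: hker; rewrite hh addrC addKr.
by rewrite (mult_charM hch) h1 FinRing.val_unitM hh mulr1.
Qed.

End NonprimitiveCharacter.

Section Kloosterman.
Variables (R : finComUnitRingType) (M : {set R}) (psi : R -> algC).
Hypotheses (hM : is_unique_maximal_ideal M) (hnf : ~ is_field_ring R).
Hypothesis hpsi : primitive_additive_char psi.

Let psiA : additive_char psi := proj1 hpsi.
Let idM := ideal_M hM.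

Lemma primitive_char_nontrivial x : x != 0 -> exists r, psi (r * x) != 1.
Proof.
move=> hx; apply/existsP; apply: contraNT hx => /existsPn hx1.
apply/eqP/set1P; rewrite -(proj2 hpsi _ (principal_ideal x)) ?principal_id //.
by move=> y /principalP[r ->]; apply/eqP/negbNE/hx1.
Qed.

Lemma sum_psi_mul w : \sum_(a : R) psi (a * w) = if w == 0 then #|R|%:R else 0.
Proof.
case: eqP => [->|/eqP hw].
  by rewrite (eq_bigr (fun=> 1)) ?sumr_const // => a _; rewrite mulr0 (psi0 psiA).
have [r hr] := primitive_char_nontrivial hw.
apply: (@sum_eq0_twist _ xpredT (+%R^~ r) _ (psi (r * w))) => // [x y /addIr //|x _].
by rewrite mulrDl (psiD psiA) mulrC.
Qed.

Lemma sum_psi_socle (L : {set R}) : is_ideal L -> L \subset socle M -> L != [set 0] ->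
  forall w, \sum_(s in L) psi (s * w) = if w \in M then #|L|%:R else 0.
Proof.
move=> hL hLs hL0 w; case: ifP => hw.
  rewrite (eq_bigr (fun=> 1)) ?sumr_const // => s /(subsetP hLs)/socleP hs.
  by rewrite hs // (psi0 psiA).
have [s0 hs0 hs00] := ideal_neq0 hL hL0.
have hwu : w \is a GRing.unit by rewrite -[_ \is a _]negbK -(max_idealE hM) hw.
have [r hr] : exists r, psi (r * (s0 * w)) != 1.
  apply: primitive_char_nontrivial; apply: contraNneq hs00 => h.
  by rewrite -[s0]mulr1 -(mulrV hwu) mulrA h mul0r.
apply: (@sum_eq0_twist _ (mem L) (+%R^~ (r * s0)) _ (psi (r * (s0 * w)))) => //.
- by move=> x y /addIr.
- by move=> x /=; rewrite (idealDr hL) // idealMl.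
- by move=> x _; rewrite mulrDl (psiD psiA) mulrC mulrA.
Qed.

Lemma sum_kloosterman_norm2 tau : mult_char tau ->
  \sum_(a : R) `|kloosterman psi tau a| ^+ 2 = (#|{: {unit R}}| * #|R|)%:R.
Proof.
move=> htau.
have expand a : `|kloosterman psi tau a| ^+ 2 = \sum_(u : {unit R}) \sum_(v : {unit R})
    tau u * (tau v)^* * psi (val u - val v) * psi (a * ((val u)^-1 - (val v)^-1)).
  rewrite normCK /kloosterman rmorph_sum mulr_suml; apply: eq_bigr => u _.
  rewrite mulr_sumr; apply: eq_bigr => v _.
  rewrite rmorphM /= mulrACA (psi_mul_conj psiA) -[RHS]mulrA -(psiD psiA).
  by congr (_ * psi _); ring.
rewrite (eq_bigr _ (fun a _ => expand a)) exchange_big natrM -sumr_const mulr_suml.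
apply: eq_bigr => u _; rewrite exchange_big (bigD1 u) //= [X in _ + X]big1 ?addr0.
  by rewrite -mulr_sumr sum_psi_mul !subrr eqxx (mult_char_mul_conj htau) (psi0 psiA) !mul1r.
move=> v hvu; rewrite -mulr_sumr sum_psi_mul; case: eqP => [/eqP|]; rewrite ?mulr0 //.
by rewrite subr_eq0 => /eqP/invr_inj/val_inj hv; rewrite hv eqxx in hvu.
Qed.

Section Localization.
Variables (tau : {unit R} -> algC) (L : {set R}).
Hypotheses (htau : mult_char tau) (hL : kernel_socle_ideal M tau L).

Lemma kloosterman_local a : kloosterman psi tau a =
  \sum_(u : {unit R}) if sqrt_mod M a u then tau u * psi (val u + a * (val u)^-1) else 0.
Proof.
case: hL => hLI hLs hL0 hker; have hLM := subset_trans hLs (socle_subset_M hM hnf).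
have twist s : s \in L -> kloosterman psi tau a = \sum_(u : {unit R})
    tau u * psi (val u + a * (val u)^-1) * psi (s * (val u - a * (val u)^-1)).
  move=> hs; rewrite /kloosterman.
  rewrite -(sum_mult_char_twist hM (fun x => psi (x + a * x^-1)) htau hLM hker hs).
  apply: eq_bigr => u _; have hu := valP u; have hsM := subsetP hLM _ hs.
  have h1s : 1 + s \is a GRing.unit by apply: unitDM (unitr1 R) hsM.
  rewrite invrM // (invr_1plus_socle hM hnf) ?(subsetP hLs) // -mulrA -(psiD psiA).
  by congr (_ * psi _); ring.
apply: (mulfI (card_ideal_neq0 hLI)).
rewrite -[in LHS](sumr_const (mem L)) mulr_suml.
under eq_bigr => s hs do rewrite mul1r (twist s hs).
rewrite exchange_big mulr_sumr; apply: eq_bigr => u _.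
rewrite -mulr_sumr (sum_psi_socle hLI hLs hL0) -(sqrt_modE hM).
by case: sqrt_mod; rewrite ?mulr0 // mulrC.
Qed.

Lemma kloosterman_M a : a \in M -> kloosterman psi tau a = 0.
Proof.
move=> ha; rewrite kloosterman_local; apply: big1 => u _; rewrite /sqrt_mod.
case: ifP => // hu2; move: (unitrX 2 (valP u)); rewrite -[_ \is a _]negbK.
by rewrite -(max_idealE hM) -(subrK a (val u ^+ 2)) (idealDr idM _ ha) hu2.
Qed.

Lemma sum_kloosterman_norm2_units :
  \sum_(a : {unit R}) `|kloosterman psi tau (val a)| ^+ 2 = (#|{: {unit R}}| * #|R|)%:R.
Proof.
rewrite -(sum_kloosterman_norm2 htau) (sum_units_M hM) [X in _ = _ + X]big1 ?addr0 //.
by move=> a ha; rewrite kloosterman_M // normr0 expr0n.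
Qed.

End Localization.

End Kloosterman.

Section Moment.
Variables (R : finComUnitRingType) (M : {set R}) (psi : R -> algC).
Hypotheses (hM : is_unique_maximal_ideal M) (hnf : ~ is_field_ring R).
Hypotheses (hodd : odd_residue_char M) (hpsi : primitive_additive_char psi).

Let psiA : additive_char psi := proj1 hpsi.
Let idM := ideal_M hM.

Definition char_sum_1plus (ch : {unit R} -> algC) (I : {set R}) :=
  \sum_(u : {unit R} | val u - 1 \in I) ch u.

Lemma socle_witness n : n \notin socle M ->
  exists2 y, y \in M & n * y \in socle M /\ psi (n * y *+ 2) != 1.
Proof.
rewrite inE => /forall_inPn[m hm hnm].
have [r hr hrs] := socle_meets hM hnm.
have [r' hr'] := primitive_char_nontrivial hpsi hr.
have h2 := unitr2 hM hodd.
exists (r' * r * m / 2); first by rewrite mulrC !(idealMl idM).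
have -> : n * (r' * r * m / 2) = r' * (r * (n * m)) / 2 by ring.
split; first exact/(idealMr (socle_ideal M))/(idealMl (socle_ideal M)).
by rewrite -mulr_natr divrK.
Qed.

Lemma sqrt_mod_shift a (v w : {unit R}) y : val w = val v + y -> y \in M ->
  sqrt_mod M a w = sqrt_mod M a v.
Proof.
move=> hw hy; rewrite /sqrt_mod hw.
have -> : (val v + y) ^+ 2 - a = (val v ^+ 2 - a) + y * (val v *+ 2 + y) by ring.
by rewrite (idealDr idM) // idealMr.
Qed.

(* The terms of second order in y vanish since they lie in (t - 1) y M = 0. *)
Lemma kl_phase_shift (a t v w : {unit R}) y :
  val w = val v + y -> y \in M -> val t - 1 \in M -> (val t - 1) * y \in socle M ->
  sqrt_mod M (val a) v ->
  (val t - 1) * (val w - val a * (val t)^-1 * (val w)^-1) =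
  (val t - 1) * (val v - val a * (val t)^-1 * (val v)^-1) + (val t - 1) * y *+ 2.
Proof.
move=> hw hy htM hys hv2; have hv := valP v; have hwu := valP w; have ht := valP t.
set n := val t - 1 in htM hys *.
set iv := (val v)^-1; set iw := (val w)^-1; set it := (val t)^-1.
have ed : iv - iw = y * iv * iw.
  transitivity (iv * (val w * iw) - iw * (val v * iv)); first by rewrite !mulrV // !mulr1.
  by rewrite hw; ring.
set X := val a * it * iv * iw - 1.
have hX : X \in M.
  rewrite -(unitMr_inM hM _ (_ : val t * val v * val w \is a GRing.unit)); last first.
    by rewrite !unitrM ht hv.
  have -> : X * (val t * val v * val w) =
      (val a - val v ^+ 2) - n * val v ^+ 2 - val t * val v * y.
    transitivity (val a * (it * val t) * (iv * val v) * (iw * val w) - val t * val v * val w).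
      by rewrite /X; ring.
    by rewrite !mulVr // !mulr1 hw /n; ring.
  apply: (idealB idM); last exact: idealMl.
  apply: (idealB idM); last exact: idealMr.
  by rewrite -opprB (idealNE idM).
transitivity (n * (val v - val a * it * iv) + n * y * (2 + X)).
  have -> : n * (val w - val a * it * iw) =
    n * (val v - val a * it * iv) + n * y + n * (val a * it) * (iv - iw) by rewrite hw; ring.
  by rewrite ed /X; ring.
by rewrite [n * y * _]mulrDr (socleP _ _ hys _ hX) addr0 mulr_natr.
Qed.

(* The shift v -> v + y of [socle_witness] permutes the square roots of a mod M
   and multiplies each term by psi (2 (t - 1) y) != 1. *)
Lemma sum_psi_sqrt_mod_eq0 (a t : {unit R}) : val t - 1 \in M -> val t - 1 \notin socle M ->
  \sum_(v : {unit R}) (if sqrt_mod M (val a) v then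
     psi ((val t - 1) * (val v - val a * (val t)^-1 * (val v)^-1)) else 0) = 0.
Proof.
move=> htM hts; have [y hyM [hys hy2]] := socle_witness hts.
pose shift (v : {unit R}) := FinRing.unit R (unitDM hM (valP v) hyM).
apply: (@sum_eq0_twist _ xpredT shift _ (psi ((val t - 1) * y *+ 2))) => // [v w|v _].
  by move/(congr1 val)/addIr/val_inj.
rewrite (sqrt_mod_shift _ (erefl : val (shift v) = val v + y)) //.
case: ifP => hv2; rewrite ?mulr0 //.
by rewrite (kl_phase_shift (erefl : val (shift v) = val v + y)) // (psiD psiA) mulrC.
Qed.

Lemma sum_psi_sqrt_mod_socle (a t : {unit R}) : val t - 1 \in socle M ->
  \sum_(v : {unit R}) (if sqrt_mod M (val a) v then
     psi ((val t - 1) * (val v - val a * (val t)^-1 * (val v)^-1)) else 0) =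
  \sum_(v : {unit R}) (if sqrt_mod M (val a) v then 1 else 0).
Proof.
move=> hts; apply: eq_bigr => v _; case: ifP => // hv2.
have hv := valP v; have ht := valP t; have htM := subsetP (socle_subset_M hM hnf) _ hts.
suff /(socleP _ _ hts) -> : val v - val a * (val t)^-1 * (val v)^-1 \in M.
  by rewrite (psi0 psiA).
rewrite -(unitMr_inM hM _ (_ : val t * val v \is a GRing.unit)) ?unitrM ?ht //.
have -> : (val v - val a * (val t)^-1 * (val v)^-1) * (val t * val v) =
    (val v ^+ 2 - val a) + (val t - 1) * val v ^+ 2.
  transitivity (val t * (val v * val v) - val a * ((val t)^-1 * val t) * ((val v)^-1 * val v)).
    by ring.
  by rewrite !mulVr // !mulr1; ring.
by rewrite (idealD idM) ?(idealMr idM).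
Qed.

Definition char_factor (ch : {unit R} -> algC) :=
  char_sum_1plus ch M * \sum_(v : {unit R}) ch v ^+ 2.

Lemma sum_char_count_sqrt_mod ch : mult_char ch ->
  \sum_(a : {unit R}) ch a * \sum_(v : {unit R}) (if sqrt_mod M (val a) v then 1 else 0) =
  char_factor ch.
Proof.
move=> hch; rewrite /char_factor; under eq_bigr => a _ do rewrite mulr_sumr.
rewrite exchange_big mulr_sumr; apply: eq_bigr => v _.
rewrite (reindex_inj (mulgI (v ^+ 2)%g)) mulr_suml [RHS]big_mkcond; apply: eq_bigr => w _.
rewrite /sqrt_mod FinRing.val_unitM FinRing.val_unitX.
have -> : val v ^+ 2 - val v ^+ 2 * val w = - (val v ^+ 2 * (val w - 1)) by ring.
rewrite (idealNE idM) (unitMl_inM hM) ?unitrX ?(valP v) //.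
by case: ifP; rewrite ?mulr0 // (mult_charM hch) (mult_charX hch) mulr1 mulrC.
Qed.

Variables (tau : {unit R} -> algC) (Lt : {set R}).
Hypotheses (htau : mult_char tau) (hLt : kernel_socle_ideal M tau Lt).

Definition kl_phase (x : R) (u : {unit R}) := val u + x * (val u)^-1.

Definition kl_pairs (x : R) (P : rel {unit R}) := \sum_(u : {unit R}) \sum_(v : {unit R})
  if P u v then tau u * (tau v)^* * psi (kl_phase x u - kl_phase x v) else 0.

Definition close_sqrt_mod (a : R) : rel {unit R} := fun u v =>
  [&& sqrt_mod M a u, sqrt_mod M a v & val u - val v \in M].

Lemma kloosterman_norm2_local x : `|kloosterman psi tau x| ^+ 2 =
  kl_pairs x (fun u v => sqrt_mod M x u && sqrt_mod M x v).
Proof.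
rewrite (kloosterman_local hM hnf hpsi htau hLt) normCK rmorph_sum mulr_suml.
apply: eq_bigr => u _; rewrite mulr_sumr; apply: eq_bigr => v _.
case: ifP => hu; case: ifP => hv /=; rewrite ?rmorph0 ?mulr0 ?mul0r //.
by rewrite rmorphM /= mulrACA (psi_mul_conj psiA).
Qed.

Lemma inv_diff_M (a u v : {unit R}) :
  (val a * ((val u)^-1 - (val v)^-1) \in M) = (val u - val v \in M).
Proof.
have hu := valP u; have hv := valP v; have ha := valP a.
have -> : val a * ((val u)^-1 - (val v)^-1) =
    (val a * (val u)^-1 * (val v)^-1) * - (val u - val v).
  transitivity (val a * (val u)^-1 * (val v * (val v)^-1) -
                val a * (val v)^-1 * (val u * (val u)^-1)).
    by rewrite !mulrV // !mulr1 mulrBr.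
  by ring.
by rewrite (unitMl_inM hM) ?(idealNE idM) // !unitrM ha !unitrV hu.
Qed.

Lemma sum_kl_pairs_socle (L : {set R}) (a : {unit R}) :
  is_ideal L -> L \subset socle M -> L != [set 0] ->
  \sum_(s in L) kl_pairs (val a * (1 + s)) (fun u v =>
     sqrt_mod M (val a * (1 + s)) u && sqrt_mod M (val a * (1 + s)) v) =
  #|L|%:R * kl_pairs (val a) (close_sqrt_mod (val a)).
Proof.
move=> hL hLs hL0.
have sqrt_mod_1plus s w : s \in L ->
    sqrt_mod M (val a * (1 + s)) w = sqrt_mod M (val a) w.
  move=> hs; have hsM := subsetP (socle_subset_M hM hnf) _ (subsetP hLs _ hs).
  by rewrite /sqrt_mod mulrDr mulr1 opprD addrA (idealDr idM) ?idealNE ?idealMl.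
have twist s : s \in L -> kl_pairs (val a * (1 + s)) (fun u v =>
    sqrt_mod M (val a * (1 + s)) u && sqrt_mod M (val a * (1 + s)) v) =
  \sum_(u : {unit R}) \sum_(v : {unit R})
    if sqrt_mod M (val a) u && sqrt_mod M (val a) v
    then tau u * (tau v)^* * psi (kl_phase (val a) u - kl_phase (val a) v) *
         psi (s * (val a * ((val u)^-1 - (val v)^-1))) else 0.
  move=> hs; apply: eq_bigr => u _; apply: eq_bigr => v _; rewrite !sqrt_mod_1plus //.
  by case: ifP => // _; rewrite -[RHS]mulrA -(psiD psiA) /kl_phase; congr (_ * psi _); ring.
rewrite (eq_bigr _ twist) exchange_big mulr_sumr; apply: eq_bigr => u _.
rewrite exchange_big mulr_sumr; apply: eq_bigr => v _.
rewrite /close_sqrt_mod andbA; case: (boolP (_ && _)) => huv; last first.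
  by rewrite mulr0 big1 // => s _; rewrite (negbTE huv).
rewrite -mulr_sumr (sum_psi_socle hM hpsi hL hLs hL0) inv_diff_M.
by case: ifP; rewrite ?mulr0 // mulrC.
Qed.

(* Substitute u = t v in the pairs (u, v). *)
Lemma kl_pairs_close_reindex (a : {unit R}) :
  kl_pairs (val a) (close_sqrt_mod (val a)) = \sum_(t : {unit R}) \sum_(v : {unit R})
    if (val t - 1 \in M) && sqrt_mod M (val a) v
    then tau t * psi ((val t - 1) * (val v - val a * (val t)^-1 * (val v)^-1)) else 0.
Proof.
rewrite /kl_pairs exchange_big [RHS]exchange_big; apply: eq_bigr => v _.
rewrite (reindex_inj (mulIg v)); apply: eq_bigr => t _.
have hv := valP v; have ht := valP t.
rewrite /close_sqrt_mod FinRing.val_unitM.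
have -> : val t * val v - val v = (val t - 1) * val v by ring.
rewrite (unitMr_inM hM) //; case: (boolP (val t - 1 \in M)) => htM; last by rewrite !andbF.
rewrite andbT; case: (boolP (sqrt_mod M (val a) v)) => hv2; last by rewrite andbF.
have htv : val (t * v)%g = val v + (val t - 1) * val v by rewrite FinRing.val_unitM; ring.
rewrite (sqrt_mod_shift _ htv) ?(idealMr idM) // hv2 /=.
rewrite (mult_charM htau) -[tau t * _ * _]mulrA (mult_char_mul_conj htau) mulr1 /kl_phase.
rewrite FinRing.val_unitM invrM //; congr (_ * psi _).
transitivity ((val t - 1) * val v - val a * (val v)^-1 * (val t * (val t)^-1) +
              val a * (val t)^-1 * (val v)^-1); last by rewrite /=; ring.
by rewrite mulrV //= ; ring.
Qed.

Lemma kl_pairs_close (a : {unit R}) :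
  kl_pairs (val a) (close_sqrt_mod (val a)) = char_sum_1plus tau (socle M) *
  \sum_(v : {unit R}) (if sqrt_mod M (val a) v then 1 else 0).
Proof.
rewrite kl_pairs_close_reindex /char_sum_1plus mulr_suml [RHS]big_mkcond.
apply: eq_bigr => t _; case: (boolP (val t - 1 \in M)) => htM; last first.
  rewrite big1 => [|v _ //]; rewrite ifN //.
  by apply: contra htM; apply: (subsetP (socle_subset_M hM hnf)).
have pull (b : bool) (x y : algC) : (if b then x * y else 0) = x * (if b then y else 0).
  by case: b; rewrite ?mulr0.
under eq_bigr => v _ do rewrite /= pull.
rewrite -mulr_sumr; case: ifP => hts.
  by rewrite (sum_psi_sqrt_mod_socle a hts).
by rewrite (sum_psi_sqrt_mod_eq0 a htM (negbT hts)) mulr0.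
Qed.

Section Twisted.
Variables (chi : {unit R} -> algC) (Lc : {set R}).
Hypotheses (hchi : mult_char chi) (hLc : kernel_socle_ideal M chi Lc).

Lemma moment_close_pairs :
  \sum_(a : {unit R}) chi a * `|kloosterman psi tau (val a)| ^+ 2 =
  \sum_(a : {unit R}) chi a * kl_pairs (val a) (close_sqrt_mod (val a)).
Proof.
case: hLc => hL hLs hL0 hker; have hLM := subset_trans hLs (socle_subset_M hM hnf).
apply: (mulfI (card_ideal_neq0 hL)).
rewrite -[in LHS](sumr_const (mem Lc)) mulr_suml.
under eq_bigr => s hs.
  rewrite mul1r.
  rewrite -(sum_mult_char_twist hM (fun x => `|kloosterman psi tau x| ^+ 2) hchi hLM hker hs).
  over.
rewrite exchange_big mulr_sumr; apply: eq_bigr => a _.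
under eq_bigr => s hs do rewrite kloosterman_norm2_local.
by rewrite -mulr_sumr sum_kl_pairs_socle // mulrCA.
Qed.

Lemma moment_factorization :
  \sum_(a : {unit R}) chi a * `|kloosterman psi tau (val a)| ^+ 2 =
  char_sum_1plus tau (socle M) * char_factor chi.
Proof.
rewrite moment_close_pairs -(sum_char_count_sqrt_mod hchi) mulr_sumr.
by apply: eq_bigr => a _; rewrite kl_pairs_close mulrCA.
Qed.

End Twisted.

Lemma char_sum_1plus_socle_value :
  char_sum_1plus tau (socle M) * char_factor (fun=> 1) = (#|{: {unit R}}| * #|R|)%:R.
Proof.
have h1 : mult_char (fun _ : {unit R} => (1 : algC)).
  by split=> [u|u v]; rewrite ?oner_neq0 ?mulr1.
have hL1 : kernel_socle_ideal M (fun=> 1) (socle M).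
  by split; [exact: socle_ideal | exact: subxx | exact: socle_neq0 |].
rewrite -(moment_factorization h1 hL1) -(sum_kloosterman_norm2_units hM hnf hpsi htau hLt).
by apply: eq_bigr => a _; rewrite mul1r.
Qed.

End Moment.

Section SquareClasses.
Variables (R : finComUnitRingType) (M : {set R}).
Hypothesis hM : is_unique_maximal_ideal M.

Let idM := ideal_M hM.

Definition units_1plus_M := [set w : {unit R} | val w - 1 \in M].
Definition squares_mod_M := [set u : {unit R} | [exists v : R, val u - v ^+ 2 \in M]].

Lemma card_coset_M (x : {unit R}) :
  #|[set u : {unit R} | val u - val x \in M]| = #|units_1plus_M|.
Proof.
rewrite -[RHS](card_imset _ (mulgI x)); apply: eq_card => u.
have hx := valP x; apply/idP/imsetP => [|[w hw ->]].
  rewrite inE => hu; exists (x^-1 * u)%g; last by rewrite mulKVg.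
  rewrite inE FinRing.val_unitM FinRing.val_unitV.
  by rewrite -[1](mulVr hx) -mulrBr (idealMl idM).
move: hw; rewrite !inE FinRing.val_unitM => hw.
by rewrite -[X in _ - X]mulr1 -mulrBr (idealMl idM).
Qed.

Lemma sqrt_mod_unit (u : {unit R}) v : val u - v ^+ 2 \in M -> v \is a GRing.unit.
Proof.
move=> huv; rewrite -(unitrX_pos v (isT : (0 < 2)%N)) -[_ \is a _]negbK -(max_idealE hM).
apply: contraL huv => hv2; rewrite -(idealDr idM _ hv2) subrK (max_idealE hM).
by rewrite negbK (valP u).
Qed.

Lemma card_sqrt_mod_le (u : {unit R}) :
  (#|[set v | sqrt_mod M (val u) v]| <=
   if u \in squares_mod_M then 2 * #|units_1plus_M| else 0)%N.
Proof.
case: (boolP (u \in squares_mod_M)) => hu; last first.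
  suff -> : [set v | sqrt_mod M (val u) v] = set0 by rewrite cards0.
  apply/setP => v; rewrite !inE; apply: contraNF hu => hv; rewrite inE.
  by apply/existsP; exists (val v); rewrite -opprB (idealNE idM).
move: hu; rewrite inE => /existsP[v0 hv0]; have hv0u := sqrt_mod_unit hv0.
pose x0 : {unit R} := FinRing.unit R hv0u.
have hv1u : - v0 \is a GRing.unit by rewrite unitrN.
pose x1 : {unit R} := FinRing.unit R hv1u.
rewrite mul2n -addnn -{1}(card_coset_M x0) -(card_coset_M x1).
apply: leq_trans (subset_leq_card _) (leq_card_setU _ _); apply/subsetP => v.
rewrite !inE /sqrt_mod /= => hv.
have : (val v - v0) * (val v - - v0) \in M.
  have -> : (val v - v0) * (val v - - v0) = (val v ^+ 2 - val u) + (val u - v0 ^+ 2) by ring.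
  exact: idealD.
by rewrite (max_idealE hM) unitrM negb_and -!(max_idealE hM).
Qed.

(* Count the pairs (u, v) with u = v^2 mod M: each v gives |1 + M| values of u,
   each square u at most 2 |1 + M| values of v. *)
Lemma card_units_le_squares : (#|{: {unit R}}| <= 2 * #|squares_mod_M|)%N.
Proof.
have hW : (0 < #|units_1plus_M|)%N by apply/card_gt0P; exists 1%g; rewrite inE subrr ideal0.
have count_pairs : (\sum_(u : {unit R}) #|[set v | sqrt_mod M (val u) v]| =
    #|{: {unit R}}| * #|units_1plus_M|)%N.
  under eq_bigr => u _ do rewrite -sum1dep_card big_mkcond.
  rewrite exchange_big -sum_nat_const; apply: eq_bigr => v _.
  rewrite -big_mkcond sum1dep_card -(card_coset_M (v ^+ 2)%g); apply: eq_card => u.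
  by rewrite !inE /sqrt_mod FinRing.val_unitX -opprB (idealNE idM).
have count_squares : (\sum_(u : {unit R})
    (if u \in squares_mod_M then 2 * #|units_1plus_M| else 0) =
    #|squares_mod_M| * (2 * #|units_1plus_M|))%N.
  by rewrite -big_mkcond sum_nat_const.
have : (\sum_(u : {unit R}) #|[set v | sqrt_mod M (val u) v]| <=
    \sum_(u : {unit R}) (if u \in squares_mod_M then 2 * #|units_1plus_M| else 0))%N.
  by apply: leq_sum => u _; apply: card_sqrt_mod_le.
by rewrite count_pairs count_squares mulnCA mulnA leq_pmul2r.
Qed.

Section CharacterCases.
Variable chi : {unit R} -> algC.
Hypothesis hchi : mult_char chi.

Lemma mult_char_squares : (forall w, w \in units_1plus_M -> chi w = 1) ->
  (forall v, chi v ^+ 2 = 1) -> forall u, u \in squares_mod_M -> chi u = 1.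
Proof.
move=> hW hsq u; rewrite inE => /existsP[v0 hv0]; have hv0u := sqrt_mod_unit hv0.
pose v : {unit R} := FinRing.unit R hv0u.
have -> : u = (v ^+ 2 * ((v ^+ 2)^-1 * u))%g by rewrite mulKVg.
rewrite (mult_charM hchi) (mult_charX hchi) hsq mul1r; apply: hW.
rewrite inE FinRing.val_unitM FinRing.val_unitV FinRing.val_unitX /=.
by rewrite -[1](mulVr (unitrX 2 hv0u)) -mulrBr (idealMl idM).
Qed.

(* A nontrivial chi with chi^2 = 1 has a kernel of index 2, which contains the
   squares; these already have index at most 2. *)
Lemma trivial_or_quad_char : (forall w, w \in units_1plus_M -> chi w = 1) ->
  (forall v, chi v ^+ 2 = 1) -> trivial_char chi \/ (forall u, chi u = quad_char M u).
Proof.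
move=> hW hsq; have hQ := mult_char_squares hW hsq.
case: (boolP [forall u, chi u == 1]) => [/forallP htriv | /forallPn[u0 hu0]].
  by left => u; apply/eqP.
right => u; rewrite /quad_char; case: ifP => hu; first by apply: hQ; rewrite inE.
have /eqP := hsq u; rewrite sqrf_eq1 => /orP[/eqP hu1|/eqP //]; exfalso.
pose K := [set x : {unit R} | chi x == 1].
have hKK : (#|K| + #|K| <= #|{: {unit R}}|)%N.
  have hsub : [set (u0 * x)%g | x in K] \subset ~: K.
    apply/subsetP => y /imsetP[x hx ->]; rewrite !inE (mult_charM hchi).
    by move: hx; rewrite inE => /eqP ->; rewrite mulr1.
  have := subset_leq_card hsub; rewrite card_imset; last exact: mulgI.
  by rewrite -(cardsC K) leq_add2l.
have hQK : squares_mod_M \proper K.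
  rewrite properE; apply/andP; split; first by apply/subsetP => x hx; rewrite inE hQ.
  by apply/subsetPn; exists u; rewrite inE ?hu1 ?hu.
by move: (proper_card hQK) card_units_le_squares hKK; lia.
Qed.

Lemma char_factor_trivial_quad :
  trivial_char chi \/ (forall u, chi u = quad_char M u) ->
  char_factor M chi = char_factor M (fun=> 1).
Proof.
move=> hc; rewrite /char_factor /char_sum_1plus; congr (_ * _).
  apply: eq_bigr => w hw; case: hc => [-> // | ->]; rewrite /quad_char ifT //.
  by apply/existsP; exists 1; rewrite expr1n.
apply: eq_bigr => v _; case: hc => [-> // | ->].
by rewrite /quad_char; case: ifP; rewrite ?sqrrN.
Qed.

Lemma char_factor_eq0 :
  ~ (trivial_char chi \/ (forall u, chi u = quad_char M u)) -> char_factor M chi = 0.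
Proof.
move=> hnc; rewrite /char_factor.
case: (boolP [forall w in units_1plus_M, chi w == 1]) => [/forall_inP hW|]; last first.
  case/forall_inPn => w0 hw0 hc.
  rewrite /char_sum_1plus (@sum_eq0_twist _ _ (fun w => w0 * w)%g _ (chi w0)) ?mul0r //.
  - exact: mulgI.
  - move=> w; move: hw0; rewrite inE FinRing.val_unitM => hw0.
    have -> : val w0 * val w - 1 = val w0 * (val w - 1) + (val w0 - 1) by ring.
    by rewrite (idealDr idM) // (unitMl_inM hM _ (valP w0)).
  - by move=> w _; rewrite (mult_charM hchi).
case: (boolP [forall v, chi v ^+ 2 == 1]) => [/forallP hsq|]; last first.
  case/forallPn => v0 hc.
  rewrite (@sum_eq0_twist _ _ (fun v => v0 * v)%g _ (chi v0 ^+ 2)) ?mulr0 //.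
    exact: mulgI.
  by move=> v _; rewrite (mult_charM hchi) exprMn.
by case: hnc; apply: trivial_or_quad_char => [w /hW | v]; apply/eqP.
Qed.

End CharacterCases.

End SquareClasses.

Unset Implicit Arguments. Set Strict Implicit.

Theorem mainTheorem10 (R : finComUnitRingType) (M : {set R})
  (hM : is_unique_maximal_ideal M)
  (hnf : ~ is_field_ring R)
  (hodd : odd_residue_char M)
  (psi : R -> algC) (hpsi : primitive_additive_char psi)
  (tau chi : {unit R} -> algC)
  (htau : mult_char tau) (htau_np : ~ primitive_mult_char M tau)
  (hchi : mult_char chi) (hchi_np : ~ primitive_mult_char M chi) :
  let S := \sum_(a : {unit R}) chi a * `|kloosterman psi tau (FinRing.uval a)| ^+ 2 in
  ((trivial_char chi \/ (forall u, chi u = quad_char M u)) ->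
     S = (#|{: {unit R}}| * #|R|)%:R) /\
  (~ (trivial_char chi \/ (forall u, chi u = quad_char M u)) -> S = 0).
Proof.
move=> S; have [Lt hLt] := nonprimitive_kernel_socle_ideal hM htau_np.
have [Lc hLc] := nonprimitive_kernel_socle_ideal hM hchi_np.
have -> : S = char_sum_1plus tau (socle M) * char_factor M chi.
  exact: (moment_factorization hM hnf hodd hpsi htau hLt hchi hLc).
split=> hc; last by rewrite (char_factor_eq0 hM hchi hc) mulr0.
rewrite (char_factor_trivial_quad hc).
exact: (char_sum_1plus_socle_value hM hnf hodd hpsi htau hLt).
Qed.
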